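(* If $r \geq 3$ and $t \geq r-1$ are integers, then for all $n$, \[ \mathrm{ex}_r ( n , \textup{Berge-}K_{2,t} ) \leq \left( \frac{ r - 1}{t} \binom{t}{r - 1} + 2t + 1 \right) \mathrm{ex}(n , K_{2,t}). \]
   Context: A hypergraph $H$ is a Berge-$F$ (for a graph $F$) if there is a bijection $f : E(F) \to E(H)$ with $e \subseteq f(e)$ for every $e \in E(F)$. $\mathrm{ex}_r(n,\textup{Berge-}F)$ is the maximum number of edges in an $n$-vertex $r$-uniform hypergraph containing no subhypergraph that is a Berge-$F$. $\mathrm{ex}(n,K_{2,t})$ is the usual Turán number: the maximum number of edges in an $n$-vertex graph with no subgraph isomorphic to $K_{2,t}$. *)

From mathcomp Require Import all_boot all_order all_algebra.
Set Implicit Arguments. Unset Strict Implicit. Unset Printing Implicit Defensive.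

(* A (hyper)graph on a finite vertex type U is its edge set : {set {set U}}. *)

Definition uniform (U : finType) (r : nat) (H : {set {set U}}) : bool :=
  [forall e in H, #|e| == r].

Definition simple_graph (U : finType) (G : {set {set U}}) : bool := uniform 2 G.

Definition has_subgraph (V U : finType) (F : {set {set V}}) (G : {set {set U}}) : bool :=
  [exists phi : {ffun V -> U},
     injectiveb phi && [forall e in F, (phi @: e) \in G]].

Definition has_berge (V U : finType) (F : {set {set V}}) (H : {set {set U}}) : bool :=
  [exists phi : {ffun V -> U}, exists f : {ffun {set V} -> {set U}},
     [&& injectiveb phi,
         [forall e in F, forall e' in F, (f e == f e') ==> (e == e')] &
         [forall e in F, (f e \in H) && ((phi @: e) \subset f e)]]].

Definition K2t (t : nat) : {set {set ('I_2 + 'I_t)%type}} :=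
  [set [set inl i; inr j] | i : 'I_2, j : 'I_t].

Definition ex (V : finType) (n : nat) (F : {set {set V}}) : nat :=
  \max_(G : {set {set 'I_n}} | simple_graph G && ~~ has_subgraph F G) #|G|.

Definition ex_berge (V : finType) (r n : nat) (F : {set {set V}}) : nat :=
  \max_(H : {set {set 'I_n}} | uniform r H && ~~ has_berge F H) #|H|.

From mathcomp Require Import all_boot all_order all_algebra.
Set Implicit Arguments. Unset Strict Implicit. Unset Printing Implicit Defensive.

(* Represent as many hyperedges of H as possible by distinct pairs contained in
   them.  The pairs used form a graph G, which is K_{2,t}-free because the
   representation lifts any K_{2,t} of G to a Berge-K_{2,t} of H.  By
   maximality every pair inside an unrepresented hyperedge already lies in G,
   so the unrepresented hyperedges are r-cliques of G.  An r-clique through an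
   edge uv is uv together with r-2 common neighbours of u and v, and there are
   fewer than t of those; hence |H| <= |G| (1 + C(t-1, r-2)), and
   C(t-1, r-2) = (r-1)/t C(t, r-1). *)

Lemma imset_set2 (A B : finType) (f : A -> B) x y : f @: [set x; y] = [set f x; f y].
Proof. by rewrite imsetU1 imset_set1. Qed.

Lemma has_K2t_subgraph (U : finType) (G : {set {set U}}) t (u v : U) (S : {set U}) :
  u != v -> u \notin S -> v \notin S -> t <= #|S| ->
  {in S, forall w, [set u; w] \in G /\ [set v; w] \in G} ->
  has_subgraph (K2t t) G.
Proof.
move=> uv uS vS tS SG.
pose a (i : 'I_2) := nth u [:: u; v] i.
pose b (j : 'I_t) : U := enum_val (widen_ord tS j).
have a_uv i : a i \in [:: u; v] by rewrite mem_nth.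
have bS j : b j \in S by apply: enum_valP.
have a_notS i : a i \notin S by have := a_uv i; rewrite !inE => /pred2P[] ->.
pose phi := [ffun z => match z with inl i => a i | inr j => b j end].
apply/existsP; exists phi; apply/andP; split.
  apply/injectiveP => -[i|j] [i'|j']; rewrite !ffunE => eq_ab.
  - have uniq_uv : uniq [:: u; v] by rewrite /= inE uv.
    congr inl; apply/val_inj/eqP.
    by rewrite -(nth_uniq u _ _ uniq_uv) ?ltn_ord //; apply/eqP.
  - by have := a_notS i; rewrite eq_ab bS.
  - by have := a_notS i'; rewrite -eq_ab bS.
  - by congr inr; apply/val_inj; have /(congr1 val) := enum_val_inj eq_ab.
apply/forallP => e; apply/implyP => /imset2P[i j _ _ ->].
rewrite imset_set2 !ffunE; have [uG vG] := SG _ (bS j).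
by have := a_uv i; rewrite !inE => /pred2P[] ->.
Qed.

Lemma uniform_card (U : finType) r (H : {set {set U}}) h :
  uniform r H -> h \in H -> #|h| = r.
Proof. by move=> /forallP/(_ h)/implyP uH /uH/eqP. Qed.

Definition common_nbhd (U : finType) (G : {set {set U}}) (g : {set U}) : {set U} :=
  [set w | [forall x in g, [set x; w] \in G]].

Lemma card_common_nbhd_lt (U : finType) t (G : {set {set U}}) (g : {set U}) :
  simple_graph G -> ~~ has_subgraph (K2t t) G -> g \in G -> #|common_nbhd G g| < t.
Proof.
move=> simpleG K2t_free gG; rewrite ltnNge; apply: contra K2t_free => tN.
have /eqP/cards2P[u [v [uv g_uv]]] := uniform_card simpleG gG.
have nbhd_uv w : w \in common_nbhd G g -> [set u; w] \in G /\ [set v; w] \in G.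
  by rewrite inE g_uv => /forallP nw; split; apply: (implyP (nw _)); rewrite !inE eqxx ?orbT.
have no_loop x : [set x; x] \notin G.
  by apply/negP => /(uniform_card simpleG); rewrite setUid cards1.
apply: (has_K2t_subgraph uv _ _ tN nbhd_uv).
  by apply/negP => /nbhd_uv[uuG _]; case/negP: (no_loop u).
by apply/negP => /nbhd_uv[_ vvG]; case/negP: (no_loop v).
Qed.

Definition clique (U : finType) (G : {set {set U}}) (h : {set U}) : Prop :=
  forall s : {set U}, s \subset h -> #|s| = 2 -> s \in G.

Section CliqueCount.

Variables (U : finType) (r : nat) (G R : {set {set U}}).
Hypotheses (simpleG : simple_graph G) (R_card : {in R, forall h : {set U}, #|h| = r})
  (R_clique : {in R, forall h : {set U}, clique G h}).

Lemma card_cliques_through_edge g :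
  g \in G -> #|[set h in R | g \subset h]| <= 'C(#|common_nbhd G g|, r - 2).
Proof.
move=> gG; rewrite -cards_draws.
have inj_diff : {in [set h in R | g \subset h] &, injective (fun h => h :\: g)}.
  move=> h h'; rewrite !inE => /andP[_ gh] /andP[_ gh'] /= eq_hh'.
  by rewrite -(setID h g) -(setID h' g) eq_hh' !(setIidPr _).
rewrite -(card_in_imset inj_diff); apply/subset_leq_card/subsetP => _ /imsetP[h + ->].
rewrite inE => /andP[hR gh]; rewrite inE cardsDS // R_card // (uniform_card simpleG gG) eqxx andbT.
apply/subsetP => w; rewrite !inE => /andP[wg wh]; apply/forallP => x; apply/implyP => xg.
apply: (R_clique hR); first by rewrite subUset !sub1set (subsetP gh).
have xw : x != w by apply: contraNneq wg => <-.
by rewrite cards2 xw.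
Qed.

Lemma card_cliques_le t :
  2 <= r -> ~~ has_subgraph (K2t t) G -> #|R| <= #|G| * 'C(t.-1, r - 2).
Proof.
move=> r_ge2 K2t_free.
have edge_in h : h \in R -> exists2 g, g \in G & g \subset h.
  move=> hR; have /card_gt1P[x [y [xh yh xy]]] : 1 < #|h| by rewrite R_card.
  have xy_h : [set x; y] \subset h by rewrite subUset !sub1set xh yh.
  by exists [set x; y]; first by apply: (R_clique hR); rewrite ?cards2 ?xy.
rewrite -sum_nat_const -sum1_card.
apply: (@leq_trans (\sum_(h in R) \sum_(g in G | g \subset h) 1)).
  by apply: leq_sum => h /edge_in[g gG gh]; rewrite (bigD1 g) ?gG ?leq_addr.
rewrite (exchange_big_dep (mem G)) /=; last by move=> h g _ /andP[].
apply: leq_sum => g gG.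
rewrite sum1dep_card (eq_card (_ : _ =i [set h in R | g \subset h])); last first.
  by move=> h; rewrite !inE gG.
apply: leq_trans (card_cliques_through_edge gG) (leq_bin2l _ _).
by have lt_t := card_common_nbhd_lt simpleG K2t_free gG; rewrite -ltnS (ltn_predK lt_t).
Qed.

End CliqueCount.

Lemma has_berge_of_has_subgraph (V U : finType) (F : {set {set V}})
    (H G : {set {set U}}) (host : {set U} -> {set U}) :
  {in G, forall g, host g \in H /\ g \subset host g} -> {in G &, injective host} ->
  has_subgraph F G -> has_berge F H.
Proof.
move=> host_in host_inj /existsP[phi /andP[/injectiveP phi_inj /forallP phiF]].
have phiG e : e \in F -> phi @: e \in G by move/(implyP (phiF e)).
apply/existsP; exists phi; apply/existsP; exists [ffun e : {set V} => host (phi @: e)].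
rewrite (introT (injectiveP _) phi_inj) /=; apply/andP; split.
  apply/forallP => e; apply/implyP => eF; apply/forallP => e'; apply/implyP => e'F.
  apply/implyP; rewrite !ffunE => /eqP/(host_inj _ _ (phiG _ eF) (phiG _ e'F)).
  by move/(imset_inj phi_inj)->.
apply/forallP => e; apply/implyP => eF; rewrite ffunE.
by have [-> ->] := host_in _ (phiG _ eF).
Qed.

(* [p h = set0] marks the hyperedge h as unrepresented. *)
Definition rep_dom (U : finType) (H : {set {set U}}) (p : {ffun {set U} -> {set U}}) :
  {set {set U}} := [set h in H | p h != set0].

Definition pair_rep (U : finType) (H : {set {set U}}) (p : {ffun {set U} -> {set U}}) :
  bool :=
  [forall h in rep_dom H p, (p h \subset h) && (#|p h| == 2)] && dinjectiveb p (rep_dom H p).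

Definition rep_graph (U : finType) (H : {set {set U}}) (p : {ffun {set U} -> {set U}}) :
  {set {set U}} := p @: rep_dom H p.

Section PairRepresentation.

Variables (U : finType) (H : {set {set U}}) (p : {ffun {set U} -> {set U}}).
Hypothesis p_rep : pair_rep H p.
Local Notation D := (rep_dom H p).

Lemma rep_dom_sub : D \subset H.
Proof. by apply/subsetP => h; rewrite inE => /andP[]. Qed.

Lemma rep_pair h : h \in D -> p h \subset h /\ #|p h| = 2.
Proof.
by case/andP: p_rep => /forallP/(_ h)/implyP rep_h _ /rep_h/andP[-> /eqP].
Qed.

Lemma rep_inj : {in D &, injective p}.
Proof. by case/andP: p_rep => _ /dinjectiveP. Qed.

Lemma simple_rep_graph : simple_graph (rep_graph H p).
Proof.
by apply/forallP => g; apply/implyP => /imsetP[h hD ->]; have [_ ->] := rep_pair hD.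
Qed.

Lemma card_rep_graph : #|rep_graph H p| = #|D|.
Proof. exact: card_in_imset rep_inj. Qed.

Lemma rep_graph_free (V : finType) (F : {set {set V}}) :
  ~~ has_berge F H -> ~~ has_subgraph F (rep_graph H p).
Proof.
apply: contra; pose host g := odflt set0 [pick h in D | p h == g].
have host_spec g : g \in rep_graph H p -> host g \in D /\ p (host g) = g.
  case/imsetP=> h hD ->; rewrite /host; case: pickP => [h' /andP[h'D /eqP] //|].
  by move/(_ h); rewrite hD eqxx.
apply: has_berge_of_has_subgraph (host) _ _ => [g /host_spec[hD eq_g]|g g' gG g'G eq_h].
  by split; [apply: (subsetP rep_dom_sub) | rewrite -{1}eq_g; case: (rep_pair hD)].
by rewrite -(host_spec g gG).2 -(host_spec g' g'G).2 eq_h.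
Qed.

Definition extend_rep (h s : {set U}) : {ffun {set U} -> {set U}} :=
  [ffun x => if x == h then s else p x].

Section Extension.

Variables (h s : {set U}).
Hypotheses (hH : h \in H) (s_h : s \subset h) (s_card : #|s| = 2)
  (s_new : s \notin rep_graph H p).

Lemma rep_dom_extend : rep_dom H (extend_rep h s) = h |: D.
Proof.
have s_nz : s != set0 by rewrite -card_gt0 s_card.
by apply/setP => x; rewrite !inE ffunE; case: (eqVneq x h) => [->|]; rewrite ?hH.
Qed.

Lemma pair_rep_extend : pair_rep H (extend_rep h s).
Proof.
rewrite /pair_rep rep_dom_extend; apply/andP; split.
  apply/forallP => x; apply/implyP; rewrite ffunE in_setU1.
  by case: (eqVneq x h) => [-> _|_ /= /rep_pair[-> ->] //]; rewrite s_h s_card.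
apply/dinjectiveP => x y; rewrite !in_setU1 !ffunE.
have p_ne_s z : z \in D -> p z != s by move=> zD; apply: contraNneq s_new => <-; apply: imset_f.
case: (eqVneq x h) => [-> _|_ /= xD]; case: (eqVneq y h) => [-> _|_ /= yD] //.
- by move/esym/eqP; rewrite (negbTE (p_ne_s _ yD)).
- by move/eqP; rewrite (negbTE (p_ne_s _ xD)).
- exact: rep_inj.
Qed.

End Extension.

Hypothesis p_max : forall p', pair_rep H p' -> #|rep_dom H p'| <= #|D|.

Lemma clique_rep_graph h : h \in H -> h \notin D -> clique (rep_graph H p) h.
Proof.
move=> hH hD s s_h s_card; apply/negPn/negP => s_new.
have := p_max (pair_rep_extend hH s_h s_card s_new).
by rewrite (rep_dom_extend hH s_card) cardsU1 hD ltnn.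
Qed.

End PairRepresentation.

Lemma exists_max_pair_rep (U : finType) (H : {set {set U}}) :
  exists2 p, pair_rep H p & forall p', pair_rep H p' -> #|rep_dom H p'| <= #|rep_dom H p|.
Proof.
have empty_rep : pair_rep H [ffun => set0].
  by apply/andP; split; [apply/forallP | apply/dinjectiveP] => x; rewrite inE ffunE eqxx andbF.
by case: (arg_maxnP (fun p => #|rep_dom H p|) empty_rep) => p p_rep p_max; exists p.
Qed.

Lemma berge_K2t_free_graph (U : finType) r t (H : {set {set U}}) :
  2 <= r -> uniform r H -> ~~ has_berge (K2t t) H ->
  exists2 G : {set {set U}}, simple_graph G && ~~ has_subgraph (K2t t) G
    & #|H| <= #|G| * ('C(t.-1, r - 2)).+1.
Proof.
move=> r_ge2 uH B_free; have [p p_rep p_max] := exists_max_pair_rep H.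
have simpleG := simple_rep_graph p_rep; have G_free := rep_graph_free p_rep B_free.
exists (rep_graph H p); first by rewrite simpleG G_free.
rewrite -(cardsID (rep_dom H p) H) (setIidPr (rep_dom_sub H p)) -card_rep_graph //.
rewrite mulnS leq_add2l; apply: card_cliques_le => // h; rewrite inE => /andP[hD hH].
  exact: uniform_card uH hH.
exact: clique_rep_graph.
Qed.

Lemma ex_berge_K2t_le r t n :
  2 <= r -> ex_berge r n (K2t t) <= ex n (K2t t) * ('C(t.-1, r - 2)).+1.
Proof.
move=> r_ge2; apply/bigmax_leqP => H /andP[uH B_free].
have [G /andP[simpleG G_free] le_HG] := berge_K2t_free_graph r_ge2 uH B_free.
by apply: leq_trans le_HG _; rewrite leq_mul2r leq_bigmax_cond ?simpleG ?G_free ?orbT.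
Qed.

Import Order.TTheory GRing.Theory Num.Theory.
Local Open Scope ring_scope.

Lemma natr_mul_bin_diag (R : numFieldType) n m :
  (0 < n)%N -> (m.+1)%:R / n%:R * ('C(n, m.+1))%:R = ('C(n.-1, m))%:R :> R.
Proof.
move=> n_gt0; have n_nz : n%:R != 0 :> R by rewrite pnatr_eq0 -lt0n.
by apply: (mulfI n_nz); rewrite mulrCA !mulrA divfK // -!natrM mul_bin_diag.
Qed.

Theorem theorem1p5 (r t n : nat) (hr : (3 <= r)%N) (ht : (r - 1 <= t)%N) :
  ((ex_berge r n (K2t t))%:R : rat) <=
    ((r - 1)%:R / t%:R * ('C(t, r - 1))%:R + 2 * t%:R + 1)
      * (ex n (K2t t))%:R.
Proof.
have r_ge2 : (2 <= r)%N by apply: leq_trans hr.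
have r1 : (r - 1 = (r - 2).+1)%N by rewrite -subSn.
have t_gt0 : (0 < t)%N by apply: leq_trans ht; rewrite r1.
rewrite r1 natr_mul_bin_diag // mulrC.
apply: le_trans (_ : (ex n (K2t t) * ('C(t.-1, r - 2)).+1)%:R <= _).
  by rewrite ler_nat ex_berge_K2t_le.
rewrite natrM ler_wpM2l // -addn1 natrD -addrA lerD2l.
by rewrite lerDr mulr_ge0.
Qed.
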